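(* Let $d>7$ be a positive integer with $\gcd(d,105)=1$, and let $n$ be a positive integer. Then the number of primes in the set $\{d+1,\,2d+1,\,3d+1,\,\ldots,\,nd+1\}$ is at most $0.46n+7$. *)

From mathcomp Require Import all_boot all_order all_algebra.

From mathcomp Require Import all_boot all_order all_algebra.
From mathcomp Require Import lra zify.
Import GRing.Theory Num.Theory.

(* A prime k d + 1 > 7 is divisible by none of 3, 5, 7.  Whether 3, 5 or 7
   divides k d + 1 depends only on k and d modulo 105, and for d coprime to
   105 exactly 48 of every 105 consecutive k escape all three; since
   48/105 < 0.46, a finite table over one period gives the bound for all n. *)

(* [k d + 1 = 0 (mod p)] is tested on reduced factors so that the table
   below evaluates quickly. *)
Definition sieved (d k : nat) : bool :=
  all (fun p => ~~ (p %| (k %% p * (d %% p)).+1)) [:: 3; 5; 7].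

Definition sieve_count (d n : nat) : nat := count (sieved d) (iota 1 n).

Lemma dvdn_mulS_modn p k d : (p %| (k %% p * (d %% p)).+1) = (p %| (k * d).+1).
Proof.
rewrite /dvdn -[(k %% p * _).+1]addn1 -[(k * d).+1]addn1.
by rewrite -modnDml modnMm modnDml.
Qed.

Lemma modnD_dvdr p m x : p %| m -> (x + m) %% p = x %% p.
Proof. by move=> /eqP pm; rewrite -modnDmr pm addn0. Qed.

Lemma sieved_prime d k : 7 < (k * d).+1 -> prime (k * d).+1 -> sieved d k.
Proof.
move=> gt7 pr; apply/allP => p; rewrite !inE dvdn_mulS_modn => /or3P[] /eqP->;
  by rewrite dvdn_prime2 //; apply: contraTN gt7 => /eqP <-.
Qed.

Lemma sieved_addl d q k : sieved (d + q * 105) k = sieved d k.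
Proof. by rewrite /sieved /= !modnD_dvdr ?dvdn_mull. Qed.

Lemma sieved_addr d k : sieved d (k + 105) = sieved d k.
Proof. by rewrite /sieved /= !modnD_dvdr. Qed.

Lemma count_iota_periodic (P : pred nat) T m q r :
  (forall x, P (x + T) = P x) ->
  count P (iota m (q * T + r)) = q * count P (iota m T) + count P (iota m r).
Proof.
move=> PT; elim: q => [|q IHq] //.
rewrite !mulSn -!addnA iotaD count_cat (addnC m) iotaDl count_map -IHq.
by congr (_ + _); apply: eq_count => x /=; rewrite addnC PT.
Qed.

Lemma sieve_table d : d < 105 -> coprime d 105 ->
  sieve_count d 105 = 48 /\
  forall r, r < 105 -> 100 * sieve_count d r <= 46 * r + 700.
Proof.
have table : all (fun d => coprime d 105 ==>
    (sieve_count d 105 == 48)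
    && all (fun r => 100 * sieve_count d r <= 46 * r + 700) (iota 0 105))
  (iota 0 105) by vm_compute.
move=> ltd cop; have dI : d \in iota 0 105 by rewrite mem_iota.
move/allP/(_ d dI): table; rewrite cop => /andP[/eqP period /allP partial].
by split=> // r ltr; apply: partial; rewrite mem_iota.
Qed.

Lemma sieve_count_mod d n : sieve_count d n = sieve_count (d %% 105) n.
Proof.
by apply: eq_count => k; rewrite {1}(divn_eq d 105) addnC sieved_addl.
Qed.

Lemma sieve_count_bound d n :
  coprime d 105 -> 100 * sieve_count d n <= 46 * n + 700.
Proof.
rewrite sieve_count_mod -coprime_modl => cop.
have [period partial] := sieve_table _ (@ltn_pmod d 105 isT) cop.
have rem_bound := partial _ (@ltn_pmod n 105 isT).
rewrite /sieve_count {1}(divn_eq n 105) count_iota_periodic; last exact: sieved_addr.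
rewrite -!/(sieve_count _ _) period.
by have := divn_eq n 105; lia.
Qed.

Local Open Scope ring_scope.

Theorem lemma5p2 (d n : nat) (hd : (7 < d)%N) (hg : gcdn d 105 = 1%N)
  (hn : (0 < n)%N) :
  ((count (fun k => prime (k * d).+1) (iota 1 n))%:R : rat)
    <= (46 / 100) * n%:R + 7.
Proof.
have primes_sieved :
    (count (fun k => prime (k * d).+1) (iota 1 n) <= sieve_count d n)%N.
  apply: sub_count => -[|k] //= pr; apply: sieved_prime pr.
  by rewrite ltnS (leq_trans (ltnW hd)) // mulSn leq_addr.
have := leq_trans (leq_mul (leqnn 100) primes_sieved)
                  (sieve_count_bound _ n (introT eqP hg)).
rewrite -(ler_nat rat) natrM natrD natrM.
lra.
Qed.
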